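(* Let $(X,d)$ be a compact metric space and $f_{1,\infty}$ a sequence of continuous self-maps of $X$. Then $(X,f_{1,\infty})$ is weakly mixing of all orders if and only if the induced system $(\mathcal{M}(X),\widetilde{f}_{1,\infty})$ is weakly mixing of all orders.
   Context: For $f_{1,\infty}=\{f_n\}_{n\ge1}$ write $f_1^n=f_n\circ\cdots\circ f_1$. $\mathcal{M}(X)$ is the space of Borel probability measures on $X$ with the weak$^*$ topology, and $\widetilde{f}_1^n(\mu)(A)=\mu((f_1^n)^{-1}(A))$ for Borel $A$. A non-autonomous system $(Y,g_{1,\infty})$ is weakly mixing of order $m$ ($m\ge2$) if for any non-empty open sets $U_1,\dots,U_m,V_1,\dots,V_m\subseteq Y$ there is $n\in\mathbb{N}$ with $g_1^n(U_i)\cap V_i\neq\emptyset$ for all $1\le i\le m$; it is weakly mixing of all orders if this holds for every $m\ge2$. *)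

From HB Require Import structures.
From mathcomp Require Import all_boot all_order all_algebra.
From mathcomp Require Import all_classical all_reals all_analysis.
Set Implicit Arguments. Unset Strict Implicit. Unset Printing Implicit Defensive.
Import Order.TTheory GRing.Theory Num.Theory.
Import numFieldNormedType.Exports.
Local Open Scope classical_set_scope.
Local Open Scope ring_scope.

(** Non-autonomous composition: [fcomp f n = f n \o ... \o f 1]
    (the sequence is indexed from 1; [f 0] is never used);
    [fcomp f 0 = id]. *)
Fixpoint fcomp {X : Type} (f : nat -> X -> X) (n : nat) : X -> X :=
  match n with
  | 0 => id
  | k.+1 => f k.+1 \o fcomp f k
  end.

(** Generic weak mixing of order [m] for a non-autonomous system on [Y],
    given its family of open sets [op] and the image maps
    [img n U = g_1^n (U)]. *)
Definition weakly_mixing_order {Y : Type} (op : set (set Y))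
  (img : nat -> set Y -> set Y) (m : nat) : Prop :=
  forall U V : 'I_m -> set Y,
    (forall i, op (U i) /\ U i !=set0) ->
    (forall i, op (V i) /\ V i !=set0) ->
    exists n : nat, (0 < n)%N /\ forall i, img n (U i) `&` V i !=set0.

Definition weakly_mixing_all_orders {Y : Type} (op : set (set Y))
  (img : nat -> set Y -> set Y) : Prop :=
  forall m : nat, (2 <= m)%N -> weakly_mixing_order op img m.

Section MX.
Context {R : realType} {X : pseudoPMetricType R}.

Definition borelX := g_sigma_algebraType (@open X).

Definition PM := probability borelX R.

Definition weak_star_open (W : set PM) : Prop :=
  forall mu : PM, W mu ->
    exists (k : nat) (g : 'I_k -> X -> R) (e : R),
      0 < e /\ (forall i, continuous (g i)) /\
      (forall nu : PM,
         (forall i, `| (\int[nu]_x g i x) - (\int[mu]_x g i x) | < e) ->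
         W nu).

Definition induced_img (f : nat -> X -> X) (n : nat) (U : set PM) : set PM :=
  [set nu | exists2 mu : PM, U mu &
     forall A : set borelX, measurable A ->
       nu A = mu (fcomp f n @^-1` A)].

End MX.

From HB Require Import structures.
From mathcomp Require Import all_boot all_order all_algebra.
From mathcomp Require Import all_classical all_reals all_analysis.
From mathcomp Require Import measurable_realfun lra.
Set Implicit Arguments. Unset Strict Implicit. Unset Printing Implicit Defensive.
Import Order.TTheory GRing.Theory Num.Theory.
Import numFieldNormedType.Exports.
Local Open Scope classical_set_scope.
Local Open Scope ring_scope.

(* Forward: a weak* open set around rho contains every measure
   sum_l w_l delta_(x_l) whose atoms range over the pieces of a fine enough
   finite open cover, with w_l the rho-mass of the pieces; mixing of all orders
   of X, applied to all pairs of pieces (one for a neighbourhood of mu_i, one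
   for a neighbourhood of nu_i) simultaneously, yields such a measure whose
   image under f_1^n is again of that form.
   Backward: an Urysohn function h vanishing at x in U and equal to 1 off U
   makes {mu | int h dmu < 1/2} a weak* neighbourhood of delta_x; if
   f_1^n(U) missed V, every mu would satisfy
   1 <= mu(X \ U) + (f_1^n mu)(X \ V) <= int h dmu + int k d(f_1^n mu). *)

Section borel_probability.
Variables (R : realType) (X : pseudoPMetricType R).
Local Notation T := (@borelX R X).

Lemma borel_open (U : set X) : open U -> measurable (U : set T).
Proof. by move=> oU; apply: sub_sigma_algebra. Qed.

Lemma continuous_borel_measurable (g : X -> R) :
  continuous g -> measurable_fun [set: T] (g : T -> R).
Proof.
move=> /continuousP cg.
apply: (measurability _ (RGenOpens.measurableE R)).
move=> _ [_ [a [b ->] <-]]; rewrite setTI.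
by apply: borel_open; apply: cg; exact: interval_open.
Qed.

Lemma compact_continuous_bounded (g : X -> R) : compact [set: X] -> continuous g ->
  exists M : R, forall x, `|g x| <= M.
Proof.
move=> cX cg.
have /compact_bounded [M [_ HM]] : compact (g @` [set: X]).
  by apply: continuous_compact => //; exact: continuous_subspaceT.
by exists (M + 1) => x; apply: (HM (M + 1)); [rewrite ltrDl | exists x].
Qed.

Lemma bounded_probability_integrable (mu : PM) (h : T -> R) (M : R) :
  measurable_fun [set: T] h -> (forall x, `|h x| <= M) ->
  mu.-integrable [set: T] (EFin \o h).
Proof.
move=> mh hM; apply: measurable_bounded_integrable => //.
  by rewrite -ge0_fin_numE // fin_num_measure.
exists M; split; first by rewrite num_real.
by move=> N MN x _ /=; apply: le_trans (hM x) (ltW MN).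
Qed.

Lemma fine_probability_setT (mu : PM) : fine (mu [set: T]) = 1.
Proof. by rewrite [mu _]probability_setT. Qed.

(* mnormalize leaves the finite measure sum_p p.1 delta_(p.2) unchanged when
   the weights sum to 1, as all lemmas below assume; otherwise the result is
   the junk value \d_point. *)
Definition dirac_mix (s : seq ({nonneg R} * T)) : PM :=
  let p k := nth (0%:nng, point) s k in
  mnormalize (msum (fun k => mscale (p k).1 \d_(p k).2) (size s)) \d_point.

Section dirac_mix.
Variable s : seq ({nonneg R} * T).
Hypothesis s1 : \sum_(p <- s) p.1%:num = 1.

Let p k := nth (0%:nng, point) s k.
Let m := msum (fun k => mscale (p k).1 \d_(p k).2) (size s).

Let mE A : m A = (\sum_(p <- s) p.1%:num%:E * \d_(p.2) A)%E.
Proof. by rewrite /m /msum (big_nth (0%:nng, point)) big_mkord. Qed.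

Let dirac_mix_m A : dirac_mix s A = m A.
Proof.
have mT : m [set: T] = 1%E.
  by rewrite mE -s1 -sumEFin; apply: eq_bigr => q _; rewrite diracT mule1.
by rewrite /dirac_mix /= /mnormalize /= -/m mT onee_eq0 /= invr1 mule1.
Qed.

Lemma dirac_mixE A : dirac_mix s A = (\sum_(p <- s) p.1%:num%:E * \d_(p.2) A)%E.
Proof. by rewrite dirac_mix_m mE. Qed.

Let ge0_integral_m (F : T -> \bar R) : measurable_fun [set: T] F ->
  (forall x, (0 <= F x)%E) ->
  (\int[m]_x F x = \sum_(p <- s) p.1%:num%:E * F p.2)%E.
Proof.
move=> mF F0; rewrite ge0_integral_measure_sum // (big_nth (0%:nng, point)) big_mkord.
apply: eq_bigr => k _.
by rewrite ge0_integral_mscale //= integral_dirac // diracT mul1e.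
Qed.

Lemma Rintegral_dirac_mix (g : T -> R) : measurable_fun [set: T] g ->
  Rintegral (dirac_mix s) [set: T] g = \sum_(p <- s) p.1%:num * g p.2.
Proof.
move=> mg; rewrite /Rintegral (eq_measure_integral m); last first.
  by move=> A _ _; exact: dirac_mix_m.
rewrite integralE funerpos funerneg !ge0_integral_m; last 4 first.
- exact/measurable_EFinP/measurable_funrneg.
- by move=> x /=; rewrite lee_fin funrneg_ge0.
- exact/measurable_EFinP/measurable_funrpos.
- by move=> x /=; rewrite lee_fin funrpos_ge0.
rewrite /=; under eq_bigr do rewrite -EFinM.
under [X in (_ - X)%E]eq_bigr do rewrite -EFinM.
rewrite !sumEFin -EFinB -sumrB /=; apply: eq_bigr => q _.
by rewrite -mulrBr -[in RHS](funrposBneg g).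
Qed.

End dirac_mix.
End borel_probability.

Section approximation.
Variables (R : realType) (X : pseudoPMetricType R).
Local Notation T := (@borelX R X).

Lemma open_nbhs_uniformly_close K (g : 'I_K -> X -> R) (e : R) (x : X) :
  (forall k, continuous (g k)) -> 0 < e ->
  exists N : set X, [/\ open N, N x & forall y, N y -> forall k, `|g k y - g k x| < e].
Proof.
move=> cg e0; exists (interior [set y | forall k, `|g k y - g k x| < e]); split.
- exact: open_interior.
- apply: filter_forall => k.
  apply: filterS (cvgr_dist_lt (g k) (g k x) (cg k x) e e0) => y /=.
  by rewrite distrC.
- by move=> y /interior_subset.
Qed.

Lemma compact_finite_cover (N : X -> set X) : compact [set: X] ->
  (forall x, open (N x) /\ N x x) ->
  exists L (c : nat -> X), forall y, exists2 l, (l < L)%N & N (c l) y.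
Proof.
rewrite compact_cover => cX hN.
have [D _ cov] := cX X [set: X] N (fun x _ => (hN x).1)
  (fun y _ => ex_intro2 _ _ y I (hN y).2).
exists (size (finmap.enum_fset D)), (nth point (finmap.enum_fset D)) => y.
have [i Di Niy] := cov y I.
by exists (index i (finmap.enum_fset D)); rewrite ?index_mem ?nth_index.
Qed.

Section first_cover.
Variables (O : nat -> set X) (L : nat).
Hypothesis oO : forall l, open (O l).
Hypothesis cover : forall x, exists2 l, (l < L)%N & O l x.

Definition first_cover (l : nat) : set T :=
  (O l : set T) `\` \bigcup_(j in `I_l) (O j : set T).

Lemma measurable_first_cover l : measurable (first_cover l).
Proof.
apply: measurableD; first exact: borel_open.
by apply: bigcup_measurable => j _; exact: borel_open.
Qed.

Lemma first_cover_sum (x : T) : exists l0 : 'I_L, O l0 x /\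
  forall phi : 'I_L -> R, \sum_(l < L) phi l * \1_(first_cover l) x = phi l0.
Proof.
pose P l := (l < L)%N && `[< O l x >].
have exP : exists l, P l.
  by have [l lL Olx] := cover x; exists l; rewrite /P lL; exact/asboolP.
case: (ex_minnP exP) => l0 /andP[l0L /asboolP Ol0x] minl0.
exists (Ordinal l0L); split => // phi.
rewrite (bigD1 (Ordinal l0L)) //= big1 ?addr0.
  rewrite indicE mem_set ?mulr1 //; split => // -[j /= jl0 Ojx].
  by have := minl0 j; rewrite /P (ltn_trans jl0 l0L) leqNgt jl0 => /(_ (asboolT Ojx)).
move=> l /eqP lNl0; rewrite indicE memNset ?mulr0 // => -[Olx notO].
have [ll0|l0l|ll0] := ltngtP l l0.
- by have := minl0 l; rewrite /P ltn_ord leqNgt ll0 => /(_ (asboolT Olx)).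
- by apply: notO; exists l0.
- by apply: lNl0; exact: val_inj.
Qed.

End first_cover.

Lemma Rintegral_step (mu : PM) L (A : 'I_L -> set T) (phi : 'I_L -> R) :
  (forall l, measurable (A l)) ->
  Rintegral mu [set: T] (fun x => \sum_(l < L) phi l * \1_(A l) x) =
  \sum_(l < L) phi l * fine (mu (A l)).
Proof.
move=> mA; rewrite /Rintegral.
under eq_integral do rewrite -sumEFin.
rewrite integral_sum //; last first.
  move=> l; under eq_fun do rewrite EFinM.
  exact/integrableZl/integrable_indic.
transitivity (fine (\sum_(l < L) (phi l * fine (mu (A l)))%:E)%E).
  congr fine; apply: eq_bigr => l _.
  under eq_integral do rewrite EFinM.
  rewrite integralZl //; last exact: integrable_indic.
  by rewrite integral_indic // setIT EFinM fineK // fin_num_measure.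
by rewrite sumEFin.
Qed.

Lemma Rintegral_uniformly_close (mu : PM) (s g : T -> R) (M e : R) :
  measurable_fun [set: T] s -> measurable_fun [set: T] g ->
  (forall x, `|s x| <= M) -> (forall x, `|g x| <= M) ->
  (forall x, `|s x - g x| <= e) ->
  `|Rintegral mu [set: T] s - Rintegral mu [set: T] g| <= e.
Proof.
move=> ms mg sM gM sge.
have mB := measurable_funB ms mg.
have dM x : `|s x - g x| <= M + M by rewrite (le_trans (ler_normB _ _)) ?lerD.
rewrite -RintegralB //; [|exact: bounded_probability_integrable ms sM
                         |exact: bounded_probability_integrable mg gM].
apply: le_trans (le_normr_Rintegral measurableT
  (bounded_probability_integrable mu mB dM)) _.
apply: le_trans (le_Rintegral measurableT _ _ (fun x _ => sge x)) _.
- have nM x : `| `|s x - g x| | <= M + M by rewrite normr_id.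
  apply: (bounded_probability_integrable _ _ nM).
  by apply: measurableT_comp; [exact: normr_measurable | exact: mB].
- exact: (bounded_probability_integrable _ (measurable_cst _) (fun=> lexx `|e|)).
by rewrite Rintegral_cst // fine_probability_setT mulr1.
Qed.

Lemma probability_discrete_approx (rho : PM) K (g : 'I_K -> X -> R) (e : R) :
  compact [set: X] -> (forall k, continuous (g k)) -> 0 < e ->
  exists L (O : 'I_L -> set X) (w : 'I_L -> {nonneg R}),
    [/\ forall l, open (O l) /\ O l !=set0,
        \sum_(l < L) (w l)%:num = 1 &
        forall a : 'I_L -> X, (forall l, O l (a l)) -> forall k,
          `|\sum_(l < L) (w l)%:num * g k (a l) - Rintegral rho [set: T] (g k)| <= e].
Proof.
move=> cX cg e0.
have e20 : 0 < e / 2 by rewrite divr_gt0.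
have /choice [N hN] := fun x => open_nbhs_uniformly_close x cg e20.
have [L [c cov]] := @compact_finite_cover N cX
  (fun x => let: And3 oN Nx _ := hN x in conj oN Nx).
have oNc l : open (N (c l)) by case: (hN (c l)).
pose A (l : 'I_L) := first_cover (N \o c) l.
have mA l : measurable (A l) by exact: measurable_first_cover.
have pt := first_cover_sum cov.
pose w l := NngNum (fine_ge0 (measure_ge0 rho (A l))).
exists L, (fun l => N (c l)), w; split.
- by move=> l; split => //; exists (c l); case: (hN (c l)).
- rewrite (eq_bigr (fun l => 1 * fine (rho (A l)))) => [|l _]; last by rewrite mul1r.
  rewrite -Rintegral_step // (_ : (fun x => _) = cst 1).
    by rewrite Rintegral_cst // fine_probability_setT mul1r.
  by apply/funext => x; have [l0 [_ ->]] := pt x.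
move=> a Na k.
have [M gM] := compact_continuous_bounded cX (cg k).
pose s x := \sum_(l < L) g k (a l) * \1_(A l) x.
have -> : \sum_(l < L) (w l)%:num * g k (a l) = Rintegral rho [set: T] s.
  by rewrite Rintegral_step //; apply: eq_bigr => l _; rewrite mulrC.
apply: (@Rintegral_uniformly_close _ _ _ M).
- by apply: measurable_sum => l; exact: measurable_funM.
- exact: continuous_borel_measurable.
- by move=> x; rewrite /s; have [l0 [_ ->]] := pt x.
- exact: gM.
move=> x; rewrite /s; have [l0 [Nx ->]] := pt x.
have [_ _ close] := hN (c l0).
rewrite -(subrKA (g k (c l0))) (le_trans (ler_normD _ _)) //.
rewrite [e](splitr e) lerD // ltW //; first exact: close.
by rewrite distrC; exact: close.
Qed.

End approximation.

Lemma convex_combination_close (R : numDomainType) J (u : 'I_J -> {nonneg R})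
    (y : 'I_J -> R) (c e : R) :
  \sum_(j < J) (u j)%:num = 1 -> (forall j, `|y j - c| <= e) ->
  `|\sum_(j < J) (u j)%:num * y j - c| <= e.
Proof.
move=> u1 close.
rewrite -[c]mul1r -u1 mulr_suml -sumrB.
under eq_bigr do rewrite -mulrBr.
apply: le_trans (ler_norm_sum _ _ _) _.
rewrite -[e]mul1r -u1 mulr_suml; apply: ler_sum => j _.
by rewrite normrM ger0_norm // ler_wpM2l.
Qed.

Section grid_mix.
Variables (R : realType) (X : pseudoPMetricType R).
Local Notation T := (@borelX R X).
Variables (L J : nat) (w : 'I_L -> {nonneg R}) (u : 'I_J -> {nonneg R}).
Hypotheses (w1 : \sum_(l < L) (w l)%:num = 1) (u1 : \sum_(j < J) (u j)%:num = 1).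

Definition grid_seq (b : 'I_L -> 'I_J -> T) : seq ({nonneg R} * T) :=
  [seq (((w l)%:num * (u j)%:num)%:nng, b l j)
    | l <- index_enum 'I_L, j <- index_enum 'I_J].

Definition grid_mix (b : 'I_L -> 'I_J -> T) : PM := dirac_mix (grid_seq b).

Lemma grid_seq_sum b : \sum_(p <- grid_seq b) p.1%:num = 1.
Proof.
rewrite big_allpairs_dep /=.
under eq_bigr do rewrite -mulr_sumr u1 mulr1.
exact: w1.
Qed.

Lemma grid_mixE b A : grid_mix b A =
  (\sum_(l < L) \sum_(j < J) ((w l)%:num * (u j)%:num)%:E * \d_(b l j) A)%E.
Proof. by rewrite /grid_mix dirac_mixE ?grid_seq_sum // big_allpairs_dep. Qed.

Lemma Rintegral_grid_mix b (g : T -> R) : measurable_fun [set: T] g ->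
  Rintegral (grid_mix b) [set: T] g =
  \sum_(j < J) (u j)%:num * \sum_(l < L) (w l)%:num * g (b l j).
Proof.
move=> mg; rewrite Rintegral_dirac_mix ?grid_seq_sum // big_allpairs_dep /=.
rewrite exchange_big /=; apply: eq_bigr => j _; rewrite mulr_sumr.
by apply: eq_bigr => l _; rewrite mulrCA mulrA.
Qed.

End grid_mix.

Lemma grid_mix_transpose (R : realType) (X : pseudoPMetricType R) L J
    (w : 'I_L -> {nonneg R}) (u : 'I_J -> {nonneg R})
    (b : 'I_L -> 'I_J -> @borelX R X) (F : @borelX R X -> @borelX R X) A :
  \sum_(l < L) (w l)%:num = 1 -> \sum_(j < J) (u j)%:num = 1 ->
  grid_mix u w (fun j l => F (b l j)) A = grid_mix w u b (F @^-1` A).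
Proof.
move=> w1 u1; rewrite !grid_mixE // exchange_big /=.
by apply: eq_bigr => l _; apply: eq_bigr => j _; rewrite mulrC.
Qed.

Section discretization.
Variables (R : realType) (X : pseudoPMetricType R).
Local Notation T := (@borelX R X).

Record discretization := Discretization {
  dsize : nat;
  dopen : 'I_dsize -> set X;
  dweight : 'I_dsize -> {nonneg R} }.
Arguments dopen : clear implicits.
Arguments dweight : clear implicits.

(* The freedom in u is what lets the same
   atoms discretize a neighbourhood of mu and, after pushing forward, one of
   its image. *)
Definition discretizes (W : set (@PM R X)) (d : discretization) : Prop :=
  [/\ forall l, open (dopen d l) /\ dopen d l !=set0,
      \sum_(l < dsize d) (dweight d l)%:num = 1 &
      forall J (u : 'I_J -> {nonneg R}) (b : 'I_(dsize d) -> 'I_J -> X),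
        \sum_(j < J) (u j)%:num = 1 -> (forall l j, dopen d l (b l j)) ->
        W (grid_mix (dweight d) u (b : _ -> _ -> T))].

Lemma weak_star_open_discretizes (W : set PM) (rho : PM) :
  compact [set: X] -> weak_star_open W -> W rho -> exists d, discretizes W d.
Proof.
move=> cX oW Wrho; have [K [g [e [e0 [cg nbhsW]]]]] := oW rho Wrho.
have e20 : 0 < e / 2 by rewrite divr_gt0.
have [L [Os [w [hO w1 approx]]]] := probability_discrete_approx rho cX cg e20.
exists (Discretization Os w); split => // J u b u1 Ob.
apply: nbhsW => k; rewrite Rintegral_grid_mix //=; last first.
  exact: continuous_borel_measurable.
apply: (le_lt_trans (convex_combination_close
  (y := fun j => \sum_(l < L) (w l)%:num * g k (b l j)) (e := e / 2) u1 _)).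
  by move=> j; apply: (approx (b^~ j)) => l; exact: Ob.
by rewrite [X in _ < X](splitr e) ltrDl.
Qed.

End discretization.
Arguments dopen {R X} d.
Arguments dweight {R X} d.

Lemma weakly_mixing_all_orders_finType {Y : Type} (op : set (set Y))
    (img : nat -> set Y -> set Y) :
  weakly_mixing_all_orders op img ->
  forall (I : finType) (U V : I -> set Y),
    (forall i, op (U i) /\ U i !=set0) -> (forall i, op (V i) /\ V i !=set0) ->
    exists n, (0 < n)%N /\ forall i, img n (U i) `&` V i !=set0.
Proof.
move=> wm I U V hU hV.
case: (pickP (@predT I)) => [i0 _|I0]; last first.
  by exists 1%N; split => // i; have := I0 i.
have [n [n0 hit]] := wm #|I|.+2 isT (fun j => U (nth i0 (enum I) j))
  (fun j => V (nth i0 (enum I) j)) (fun=> hU _) (fun=> hV _).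
exists n; split => // i.
have iI : (index i (enum I) < #|I|.+2)%N.
  by rewrite ltnS leqW // ltnW // cardE index_mem mem_enum.
by have := hit (Ordinal iI); rewrite /= nth_index // mem_enum.
Qed.

Lemma induced_weakly_mixing_all_orders (R : realType) (X : pseudoPMetricType R)
    (f : nat -> X -> X) :
  compact [set: X] ->
  weakly_mixing_all_orders (@open X) (fun n U => fcomp f n @` U) ->
  weakly_mixing_all_orders (@weak_star_open R X) (induced_img f).
Proof.
move=> cX wmX m _ UU VV hUU hVV.
have /choice [dU hdU] : forall i, exists d, discretizes (UU i) d.
  by move=> i; have [rho] := (hUU i).2; exact: weak_star_open_discretizes (hUU i).1.
have /choice [dV hdV] : forall i, exists d, discretizes (VV i) d.
  by move=> i; have [rho] := (hVV i).2; exact: weak_star_open_discretizes (hVV i).1.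
pose I := {i : 'I_m & ('I_(dsize (dU i)) * 'I_(dsize (dV i)))%type}.
have [n [n0 hit]] := weakly_mixing_all_orders_finType wmX
  (U := fun t : I => dopen (dU (tag t)) (tagged t).1)
  (V := fun t : I => dopen (dV (tag t)) (tagged t).2)
  (fun t => let: And3 hO _ _ := hdU (tag t) in hO _)
  (fun t => let: And3 hO _ _ := hdV (tag t) in hO _).
pose F := fcomp f n.
have /choice [x hx] : forall t : I, exists x,
    dopen (dU (tag t)) (tagged t).1 x /\ dopen (dV (tag t)) (tagged t).2 (F x).
  by move=> t; have [_ [[x Ux <-] Vy]] := hit t; exists x.
exists n; split => // i.
have [_ wU1 discrU] := hdU i; have [_ wV1 discrV] := hdV i.
pose b l j : X := x (existT _ i (l, j)).
exists (grid_mix (dweight (dV i)) (dweight (dU i)) (fun j l => F (b l j) : @borelX R X)).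
  split; last by apply: discrV => // j l; exact: (hx (existT _ i (l, j))).2.
exists (grid_mix (dweight (dU i)) (dweight (dV i)) (b : _ -> _ -> @borelX R X)).
  by apply: discrU => // l j; exact: (hx (existT _ i (l, j))).1.
by move=> A _; exact: grid_mix_transpose.
Qed.

Lemma continuous_fcomp {X : topologicalType} (f : nat -> X -> X) :
  (forall n, (0 < n)%N -> continuous (f n)) -> forall n, continuous (fcomp f n).
Proof.
move=> hf; elim => [|n IH] x /=; first exact: cvg_id.
by apply: continuous_comp; [exact: IH | exact: hf].
Qed.

Section test_functions.
Variables (R : realType) (X : pseudoPMetricType R).
Local Notation T := (@borelX R X).

Lemma urysohn_open_nbhs (x : X) (U : set X) : open U -> U x ->
  exists h : X -> R, [/\ continuous h, h x = 0, (forall y, ~ U y -> h y = 1) &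
    (forall y, 0 <= h y)].
Proof.
move=> oU Ux.
have sep := @point_uniform_separator R X x (~` U) (open_closedC oU) (fun nUx => nUx Ux).
exists (Urysohn [set x] (~` U)); split.
- exact: Urysohn_continuous.
- by apply: (Urysohn_sub0 sep); exists x.
- by move=> y nUy; apply: (Urysohn_sub1 sep); exists y.
- move=> y; have /(_ _ (ex_intro2 _ _ y I erefl)) := @Urysohn_range X R [set x] (~` U).
  by rewrite /= in_itv /= => /andP[].
Qed.

Lemma probability_le_Rintegral (mu : PM) (h : X -> R) (B : set X) :
  compact [set: X] -> measurable (B : set T) -> continuous h ->
  (forall y, 0 <= h y) -> (forall y, B y -> 1 <= h y) ->
  (mu B <= (Rintegral mu [set: T] h)%:E)%E.
Proof.
move=> cX mB ch h0 hB.
have mh := continuous_borel_measurable ch.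
have [M hM] := compact_continuous_bounded cX ch.
have hi := bounded_probability_integrable mu mh hM.
rewrite /Rintegral fineK; last exact: integrable_fin_num.
apply: (@le_trans _ _ (\int[mu]_x (\1_(B : set T) x)%:E)%E).
  by rewrite integral_indic // setIT.
apply: ge0_le_integral => //.
- by apply/measurable_EFinP; exact: measurable_indic.
- exact/measurable_EFinP.
- by move=> y _; rewrite lee_fin indicE; case: (boolP (y \in B)) => [/set_mem/hB|].
Qed.

Lemma weak_star_open_Rintegral_lt (q : X -> R) (r : R) : continuous q ->
  weak_star_open [set mu : PM | Rintegral mu [set: T] q < r].
Proof.
move=> cq mu qmu; exists 1%N, (fun=> q), (r - Rintegral mu [set: T] q).
split; first by rewrite subr_gt0.
split=> // nu /(_ ord0) close /=.
by have := ler_norm (Rintegral nu [set: T] q - Rintegral mu [set: T] q); lra.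
Qed.

Lemma Rintegral_dirac (x : T) (q : T -> R) : measurable_fun [set: T] q ->
  Rintegral \d_x [set: T] q = q x.
Proof.
by move=> mq; rewrite /Rintegral integral_dirac ?diracT ?mul1e //; exact/measurable_EFinP.
Qed.

Lemma pushforward_complement_cover (mu nu : PM) (F : X -> X) (U V : set X) :
  continuous F -> open U -> open V ->
  (forall A : set T, measurable A -> nu A = mu (F @^-1` A)) ->
  F @` U `&` V = set0 -> (1 <= mu (~` U) + nu (~` V))%E.
Proof.
move=> cF oU oV push disj.
have mU : measurable (~` U : set T) by apply: measurableC; exact: borel_open.
have mFV : measurable (~` (F @^-1` V) : set T).
  by apply: measurableC; apply: borel_open; move: cF => /continuousP; apply.
have cover : [set: T] = ~` U `|` ~` (F @^-1` V).
  apply/seteqP; split => x // _; case: (pselect (U x)) => Ux; [right|by left].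
  by move=> VFx; rewrite -[False]/(set0 (F x)) -disj; split => //; exists x.
rewrite push; last by apply: measurableC; exact: borel_open.
rewrite -[1%E](probability_setT mu) cover.
exact: measureU2.
Qed.

End test_functions.

Lemma weakly_mixing_all_orders_of_induced (R : realType) (X : pseudoPMetricType R)
    (f : nat -> X -> X) :
  compact [set: X] -> (forall n : nat, (0 < n)%N -> continuous (f n)) ->
  weakly_mixing_all_orders (@weak_star_open R X) (induced_img f) ->
  weakly_mixing_all_orders (@open X) (fun n U => fcomp f n @` U).
Proof.
move=> cX hf wmM m m2 U V hU hV.
pose small q := [set mu : @PM R X | Rintegral mu [set: @borelX R X] q < 2^-1].
have small_nbhs (W : set X) : open W /\ W !=set0 -> exists h : X -> R,
    [/\ continuous h, (forall y, ~ W y -> h y = 1), (forall y, 0 <= h y) &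
        weak_star_open (small h) /\ small h !=set0].
  move=> [oW [x Wx]]; have [h [ch hx h1 h0]] := urysohn_open_nbhs oW Wx.
  exists h; split => //; split; first exact: weak_star_open_Rintegral_lt.
  exists \d_(x : @borelX R X).
  by rewrite /small /= Rintegral_dirac ?hx; [lra | exact: continuous_borel_measurable].
have /choice [h hh] := fun i => small_nbhs _ (hU i).
have /choice [k hk] := fun i => small_nbhs _ (hV i).
have [n [n0 hit]] := wmM m m2 (fun i => small (h i)) (fun i => small (k i))
  (fun i => let: And4 _ _ _ nbhs := hh i in nbhs)
  (fun i => let: And4 _ _ _ nbhs := hk i in nbhs).
exists n; split => // i.
have [nu [[mu hmu push] hnu]] := hit i.
apply/set0P/negP => /eqP disj.
have [ch h1 h0 _] := hh i; have [ck k1 k0 _] := hk i.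
have cover := pushforward_complement_cover (continuous_fcomp hf (n := n))
  (hU i).1 (hV i).1 push disj.
have bU : (mu (~` U i) <= (Rintegral mu [set: @borelX R X] (h i))%:E)%E.
  apply: probability_le_Rintegral => // [|y /h1 -> //].
  by apply: measurableC; exact: borel_open (hU i).1.
have bV : (nu (~` V i) <= (Rintegral nu [set: @borelX R X] (k i))%:E)%E.
  apply: probability_le_Rintegral => // [|y /k1 -> //].
  by apply: measurableC; exact: borel_open (hV i).1.
have := le_trans cover (leeD bU bV).
by rewrite -EFinD lee_fin; move: hmu hnu; rewrite /small /=; lra.
Qed.

Theorem theorem3p5 (R : realType) (X : pseudoPMetricType R)
  (f : nat -> X -> X) :
  hausdorff_space X -> compact [set: X] ->
  (forall n : nat, (0 < n)%N -> continuous (f n)) ->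
  (weakly_mixing_all_orders (@open X) (fun n U => fcomp f n @` U) <->
   weakly_mixing_all_orders (@weak_star_open R X) (induced_img f)).
Proof.
move=> _ cX hf; split.
- exact: induced_weakly_mixing_all_orders.
- exact: weakly_mixing_all_orders_of_induced.
Qed.
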